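(* Let $e_1,\dots,e_k\in\mathbb{C}^{n\times n}$ be an anticommuting family, $n\ge 1$. Then \[\sum_{i=1}^k \mathrm{rk}(e_i^n)\le (2\log_2 n+1)\,n.\]
   Context: A family $e_1,\dots,e_k$ of complex $n\times n$ matrices is called anticommuting if $e_ie_j=-e_je_i$ for all distinct $i,j\in\{1,\dots,k\}$. $\mathrm{rk}$ denotes matrix rank. *)

From Stdlib Require Import Reals.
From HB Require Import structures.
From mathcomp Require Import all_boot all_order all_algebra.
Set Implicit Arguments. Unset Strict Implicit. Unset Printing Implicit Defensive.
Import GRing.Theory.

Definition log_bound (n : nat) : R :=
  Rmult (Rplus (Rmult 2 (Rdiv (ln (INR n)) (ln 2))) 1) (INR n).

Definition le_log_bound (s n : nat) : Prop := Rle (INR s) (log_bound n).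

Definition anticommuting (F : pzRingType) (n k : nat) (e : 'I_k -> 'M[F]_n) : Prop :=
  forall i j : 'I_k, i != j -> (e i *m e j = - (e j *m e i))%R.

(* If some e_i^n has rank strictly between 0 and n then, the ranks of the
   powers of e_i being stationary from exponent n on, C^n is the direct sum of
   the image and the kernel of A = e_i^n (Fitting decomposition).  Every e_j
   satisfies e_j A = +-A e_j, so both summands are e_j-stable and rk(e_j^n) is
   the sum of the ranks of the powers of the two restrictions of e_j; induction
   on n concludes, the factor 2 log_2 n + 1 being nondecreasing in n.
   Otherwise every e_i^n is 0 or invertible, and the m invertible e_i form an
   anticommuting family of invertible matrices, for which 2^(m/2) <= n: e_2
   maps an eigenspace W of e_1 into the eigenspace of the opposite eigenvalue,
   so 2 dim W <= n, while the m - 2 products e_1 e_2 e_j (j > 2) commute with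
   e_1 and anticommute pairwise, hence restrict to an invertible anticommuting
   family on W.  The sum is then m n <= (2 log_2 n + 1) n. *)

From Stdlib Require Import Reals Lra.
From HB Require Import structures.
From mathcomp Require Import all_boot all_order all_algebra zify.
Import GRing.Theory Num.Theory.

Set Implicit Arguments.
Unset Strict Implicit.
Unset Printing Implicit Defensive.

Local Open Scope ring_scope.

Section LogBound.
Local Open Scope R_scope.

Lemma ln_le x y : 0 < x -> x <= y -> ln x <= ln y.
Proof. by move=> x0 [xy|<-]; [left; apply: ln_increasing | right]. Qed.

Lemma INR_ge1 (n : nat) : (0 < n)%N -> 1 <= INR n.
Proof. by move=> /leP/(le_INR 1). Qed.

Lemma INR_expn (b m : nat) : INR (b ^ m) = INR b ^ m.
Proof. by elim: m => [|m IH] //; rewrite expnS mult_INR IH. Qed.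

Lemma log_factor_le (r n : nat) : (0 < r)%N -> (r <= n)%N ->
  2 * (ln (INR r) / ln 2) + 1 <= 2 * (ln (INR n) / ln 2) + 1.
Proof.
move=> /INR_ge1 r1 /leP/le_INR rn; have l2 := ln_lt_2.
apply: Rplus_le_compat_r; apply: Rmult_le_compat_l; first lra.
apply: Rmult_le_compat_r; first by left; apply: Rinv_0_lt_compat; lra.
by apply: ln_le; lra.
Qed.

Lemma le_log_bound_add (a b r n : nat) : (0 < r)%N -> (r < n)%N ->
  le_log_bound a r -> le_log_bound b (n - r) -> le_log_bound (a + b) n.
Proof.
move=> r0 rn; rewrite /le_log_bound /log_bound plus_INR => ha hb.
have nr0 : (0 < n - r)%N by rewrite subn_gt0.
have fr := log_factor_le r0 (ltnW rn).
have fnr := log_factor_le nr0 (leq_subr r n).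
set L := 2 * (ln (INR n) / ln 2) + 1 in fr fnr *.
have -> : INR n = INR r + INR (n - r) by rewrite -plus_INR; congr INR; lia.
have := Rmult_le_compat_r _ _ _ (pos_INR r) fr.
have := Rmult_le_compat_r _ _ _ (pos_INR (n - r)) fnr.
lra.
Qed.

Lemma le_log_bound_mul (s n : nat) : (0 < n)%N -> (2 ^ s./2 <= n)%N ->
  le_log_bound (n * s) n.
Proof.
rewrite /le_log_bound /log_bound mult_INR => /INR_ge1 n1 /leP/le_INR.
rewrite INR_expn => pow_le; have l2 := ln_lt_2.
have half_le : INR s./2 <= ln (INR n) / ln 2.
  apply: (Rmult_le_reg_r (ln 2)); first lra.
  have -> : ln (INR n) / ln 2 * ln 2 = ln (INR n) by field; lra.
  rewrite -ln_pow; last by simpl; lra.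
  by apply: ln_le => //; apply: pow_lt; simpl; lra.
have : (s <= s./2.*2 + 1)%N.
  by rewrite -{1}(odd_double_half s) addnC leq_add2l leq_b1.
move/leP/le_INR; rewrite plus_INR -muln2 mult_INR /= => s_le.
nra.
Qed.

End LogBound.

Section Restriction.
Variable F : fieldType.

(* The matrix, in the basis formed by the rows of a row-free [B], of the
   restriction of [A] to the row space of [B] (meaningful when that space is
   [A]-stable). *)
Definition restrmx d n (B : 'M[F]_(d, n)) (A : 'M[F]_n) : 'M[F]_d :=
  locked (B *m A *m pinvmx B).

Variables (d n : nat) (B : 'M[F]_(d, n)).

Lemma restrmxE A : stablemx B A -> restrmx B A *m B = B *m A.
Proof. by rewrite /restrmx -lock; apply: mulmxKpV. Qed.

Lemma restrmx_exp A m : stablemx B A -> restrmx B A ^+ m *m B = B *m A ^+ m.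
Proof.
move=> sBA; elim: m => [|m IH]; first by rewrite !expr0 mul1mx mulmx1.
by rewrite !exprS -!mulmxE -mulmxA IH mulmxA restrmxE // mulmxA.
Qed.

Lemma stablemx_exp A m : stablemx B A -> stablemx B (A ^+ m).
Proof. by move=> sBA; rewrite -restrmx_exp // submxMl. Qed.

Hypothesis freeB : row_free B.

Lemma mxrank_restrmx_exp A m :
  stablemx B A -> \rank (restrmx B A ^+ m) = \rank (B *m A ^+ m).
Proof. by move=> sBA; rewrite -restrmx_exp // mxrankMfree. Qed.

Lemma restrmx_unit A : stablemx B A -> A \in unitmx -> restrmx B A \in unitmx.
Proof.
move=> sBA uA; rewrite -row_full_unit /row_full.
have := mxrank_restrmx_exp 1 sBA; rewrite !expr1 mxrankMfree ?row_free_unit //.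
by move=> ->.
Qed.

Lemma anticommuting_restrmx k (e : 'I_k -> 'M[F]_n) :
  (forall i, stablemx B (e i)) -> anticommuting e ->
  anticommuting (fun i => restrmx B (e i)).
Proof.
move=> sBe ac i j ij; apply: (row_free_inj freeB) => /=.
by rewrite mulNmx -!mulmxA !restrmxE // !mulmxA !restrmxE // -!mulmxA (ac i j ij) mulmxN.
Qed.

End Restriction.

Section PowerRank.
Variables (F : fieldType) (n : nat) (A : 'M[F]_n).

Lemma mxrank_exprD_le k m : (\rank (A ^+ (k + m)) <= \rank (A ^+ k))%N.
Proof. by rewrite addnC exprD -mulmxE mxrankM_maxr. Qed.

Lemma eqmx_expr_stable k m :
  \rank (A ^+ k.+1) = \rank (A ^+ k) -> (A ^+ (k + m) :=: A ^+ k)%MS.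
Proof.
move=> rkS; have stepS : (A ^+ k.+1 :=: A ^+ k)%MS.
  apply/eqmxP; rewrite -(geq_leqif (mxrank_leqif_eq _)) ?rkS //.
  by rewrite exprS -mulmxE submxMl.
elim: m => [|m IH]; first by rewrite addn0.
apply: eqmx_trans stepS; rewrite addnS !exprSr -!mulmxE.
exact: eqmxMr.
Qed.

Lemma mxrank_expr_drop k : (\rank (A ^+ k) + k <= n)%N \/
  exists2 j, (j < k)%N & \rank (A ^+ j.+1) = \rank (A ^+ j).
Proof.
elim: k => [|k [IH|[j jk rkj]]]; first by left; rewrite expr0 mxrank1 addn0.
- have := mxrank_exprD_le k 1; rewrite addn1 leq_eqVlt => /orP[/eqP rkS|ltS].
    by right; exists k.
  by left; rewrite addnS; apply: leq_trans IH; rewrite ltn_add2r.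
- by right; exists j => //; apply: ltnW.
Qed.

Lemma mxrank_expr_stable m : (n <= m)%N -> \rank (A ^+ m) = \rank (A ^+ n).
Proof.
move=> nm; have [rk0|[j jn rkj]] := mxrank_expr_drop n.
  have rkn0 : \rank (A ^+ n) = 0%N by lia.
  apply/eqP; rewrite rkn0 -leqn0 -rkn0 -(subnKC nm); exact: mxrank_exprD_le.
have := eqmx_expr_stable (m - j) rkj; have := eqmx_expr_stable (n - j) rkj.
by rewrite !subnKC ?(ltnW jn) ?(ltnW (leq_trans jn nm)) // => -> ->.
Qed.

End PowerRank.

Section Fitting.
Variable F : fieldType.

Lemma semicomm_mx_stable n (f g : 'M[F]_n) c :
  c != 0 -> g *m f = c *: (f *m g) -> stablemx f g.
Proof.
move=> c0 gf; have -> : f *m g = c^-1 *: (g *m f).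
  by rewrite gf scalerA mulVf // scale1r.
by rewrite scalemx_sub // submxMl.
Qed.

Lemma semicomm_mx_stable_ker n (f g : 'M[F]_n) c :
  g *m f = c *: (f *m g) -> stablemx (kermx f) g.
Proof.
move=> gf; apply/sub_kermxP.
by rewrite -mulmxA gf -scalemxAr mulmxA mulmx_ker mul0mx scaler0.
Qed.

Lemma mulmx_exp_anticomm n (x y : 'M[F]_n) m :
  y *m x = - (x *m y) -> y *m x ^+ m = (-1) ^+ m *: (x ^+ m *m y).
Proof.
move=> yx; elim: m => [|m IH]; first by rewrite !expr0 mul1mx mulmx1 scale1r.
rewrite !exprSr -!mulmxE mulmxA IH -scalemxAl -!mulmxA yx mulmxN.
by rewrite scalerN -scaleN1r scalerA mulrC.
Qed.

Lemma anticommuting_exp_semicomm n k (e : 'I_k -> 'M[F]_n) i j m :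
  anticommuting e -> exists2 c : F, c != 0 & e j *m e i ^+ m = c *: (e i ^+ m *m e j).
Proof.
move=> ac; have [<-|ij] := eqVneq i j.
  by exists 1; rewrite ?oner_eq0 // scale1r !mulmxE -exprS exprSr.
exists ((-1) ^+ m); first by rewrite expf_eq0 oppr_eq0 oner_eq0 andbF.
by apply: mulmx_exp_anticomm; apply: ac; rewrite eq_sym.
Qed.

Lemma capmx_kermx_eq0 n (A : 'M[F]_n) :
  \rank (A *m A) = \rank A -> (A :&: kermx A)%MS = 0.
Proof. by move=> rkAA; apply/eqP/mxrank_injP. Qed.

Lemma mxrank_mul_direct n d1 d2 (U : 'M[F]_(d1, n)) (N : 'M[F]_(d2, n)) M :
  (U :&: N)%MS = 0 -> (\rank U + \rank N)%N = n ->
  stablemx U M -> stablemx N M -> \rank M = (\rank (U *m M) + \rank (N *m M))%N.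
Proof.
move=> UN0 rkUN sUM sNM.
have capM : (U *m M :&: N *m M)%MS = 0.
  by apply/eqP; rewrite -submx0 -UN0 capmxS.
rewrite -(mxrank_disjoint_sum capM) -addsmxMr; apply/eqP.
rewrite eqn_leq mxrankM_maxr andbT; apply: mxrankS.
rewrite -{1}(mul1mx M) submxMr // sub1mx /row_full.
by rewrite mxrank_disjoint_sum // rkUN.
Qed.

Lemma mxrank_exp_fitting n (A M : 'M[F]_n) :
  \rank (A *m A) = \rank A -> stablemx A M -> stablemx (kermx A) M ->
  \rank (M ^+ n) = (\rank (restrmx (row_base A) M ^+ \rank A)
                    + \rank (restrmx (row_base (kermx A)) M ^+ \rank (kermx A)))%N.
Proof.
set U := row_base A; set N := row_base (kermx A) => rkAA sAM sKM.
rewrite -stablemx_row_base -/U in sAM; rewrite -stablemx_row_base -/N in sKM.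
rewrite -(mxrank_expr_stable (restrmx U M) (rank_leq_col A)).
rewrite -(mxrank_expr_stable (restrmx N M) (rank_leq_col (kermx A))).
rewrite !mxrank_restrmx_exp ?row_base_free //.
apply: mxrank_mul_direct; rewrite ?stablemx_exp //.
- by apply/eqP; rewrite -submx0 -(capmx_kermx_eq0 rkAA) capmxS ?eq_row_base.
- by rewrite !eq_row_base mxrank_ker subnKC // rank_leq_row.
Qed.

End Fitting.

Lemma eigenspace_anticomm (F : fieldType) r (a b : 'M[F]_r) l :
  a *m b = - (b *m a) -> (eigenspace a l *m b <= eigenspace a (- l))%MS.
Proof.
move=> ab; apply/eigenspaceP.
rewrite -mulmxA -[b *m a]opprK -ab mulmxN mulmxA.
by have /eigenspaceP -> := submx_refl (eigenspace a l); rewrite -scalemxAl scaleNr.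
Qed.

Lemma eigenvalue_unitmx_neq0 (F : fieldType) r (a : 'M[F]_r) l :
  a \in unitmx -> eigenvalue a l -> l != 0.
Proof.
move=> ua; apply: contraTneq => ->.
by rewrite /eigenvalue /eigenspace raddf0 subr0 negbK kermx_eq0 row_free_unit.
Qed.

Lemma exists_eigenvalue (F : closedFieldType) r (a : 'M[F]_r) :
  (0 < r)%N -> exists l, eigenvalue a l.
Proof.
move=> r0; have : size (char_poly a) != 1%N by rewrite size_char_poly eqSS -lt0n.
by case/closed_rootP=> l; exists l; rewrite eigenvalue_root_char.
Qed.

Lemma capmx_eigenspace_opp (C : numFieldType) r (a : 'M[C]_r) l :
  l != 0 -> (eigenspace a l :&: eigenspace a (- l))%MS = 0.
Proof.
move=> l0; apply/eqP; rewrite -submx0; set X := (_ :&: _)%MS.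
have /eigenspaceP Xl : (X <= eigenspace a l)%MS by apply: capmxSl.
have /eigenspaceP XNl : (X <= eigenspace a (- l))%MS by apply: capmxSr.
have : l *+ 2 *: X = 0 by rewrite mulr2n scalerDl -{1}Xl XNl scaleNr addNr.
by move/eqP; rewrite scaler_eq0 mulrn_eq0 (negbTE l0) => /eqP->.
Qed.

Lemma mxrank_eigenspace_anticomm (C : numFieldType) r (a b : 'M[C]_r) l :
  l != 0 -> b \in unitmx -> a *m b = - (b *m a) ->
  (2 * \rank (eigenspace a l) <= r)%N.
Proof.
move=> l0 ub ab.
have rkWb : \rank (eigenspace a l *m b) = \rank (eigenspace a l).
  by rewrite mxrankMfree // row_free_unit.
have := mxrankS (eigenspace_anticomm l ab).
have := mxrank_disjoint_sum (capmx_eigenspace_opp a l0).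
have := rank_leq_col (eigenspace a l + eigenspace a (- l))%MS.
lia.
Qed.

Section AnticommutingFamilies.
Variable F : pzRingType.

Lemma anticommuting_comp n k k' (e : 'I_k -> 'M[F]_n) (f : 'I_k' -> 'I_k) :
  injective f -> anticommuting e -> anticommuting (e \o f).
Proof. by move=> injf ac i j ij; apply: ac; rewrite (inj_eq injf). Qed.

Lemma comm_mulmx_anticomm n (a b c : 'M[F]_n) :
  c *m a = - (a *m c) -> c *m b = - (b *m c) -> comm_mx c (a *m b).
Proof.
by move=> ca cb; rewrite /comm_mx mulmxA ca mulNmx -mulmxA cb mulmxN opprK mulmxA.
Qed.

Lemma comm_mx_twist n (a b c : 'M[F]_n) :
  b *m a = - (a *m b) -> c *m a = - (a *m c) -> comm_mx a (a *m b *m c).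
Proof.
move=> ba ca; rewrite /comm_mx -!mulmxA ca mulmxN (mulmxA b) ba mulNmx.
by rewrite !mulmxN opprK !mulmxA.
Qed.

Lemma anticommuting_lmul n k (g : 'M[F]_n) (f : 'I_k -> 'M[F]_n) :
  (forall j, comm_mx (f j) g) -> anticommuting f ->
  anticommuting (fun j => g *m f j).
Proof.
move=> cfg ac i j ij.
have gfgf i' j' : g *m f i' *m (g *m f j') = g *m g *m (f i' *m f j').
  by rewrite mulmxA -(mulmxA g) cfg !mulmxA.
by rewrite !gfgf (ac i j ij) mulmxN.
Qed.

End AnticommutingFamilies.

Lemma anticommuting_unitmx_bound (C : numClosedFieldType) k r
    (e : 'I_k -> 'M[C]_r) : (0 < r)%N -> anticommuting e ->
  (forall i, e i \in unitmx) -> (2 ^ k./2 <= r)%N.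
Proof.
elim/ltn_ind: k r e => -[|[|k]] IHk r e r0 ac ue; rewrite ?expn0 //.
set a := e ord0; set b := e (Ordinal (isT : (1 < k.+2)%N)).
pose c j := e (rshift 2 j).
have [l eig_l] := exists_eigenvalue a r0.
have l0 := eigenvalue_unitmx_neq0 (ue _) eig_l.
set W := eigenspace a l.
have ca j : c j *m a = - (a *m c j) by apply: ac.
have cb j : c j *m b = - (b *m c j) by apply: ac.
have ab : a *m b = - (b *m a) by apply: ac.
have ba : b *m a = - (a *m b) by apply: ac.
have sW j : stablemx (row_base W) (a *m b *m c j).
  by rewrite stablemx_row_base; apply/comm_mx_stable_eigenspace/comm_mx_twist.
pose g j := restrmx (row_base W) (a *m b *m c j).
have acg : anticommuting g.
  apply: (anticommuting_restrmx (row_base_free W) sW).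
  apply: anticommuting_lmul => [j|]; first exact: comm_mulmx_anticomm.
  exact: anticommuting_comp (@rshift_inj 2 k) ac.
have ug j : g j \in unitmx.
  by apply: (restrmx_unit (row_base_free W) (sW j)); rewrite !unitmx_mul !ue.
have W0 : (0 < \rank W)%N by rewrite lt0n mxrank_eq0.
have := IHk k (leqnSn _) _ g W0 acg ug.
have := mxrank_eigenspace_anticomm l0 (ue _) ab.
rewrite /= expnS -/W => rkW hW.
by rewrite (leq_trans _ rkW) // leq_mul2l hW orbT.
Qed.

Lemma unitmx_of_exp (F : comUnitRingType) n (x : 'M[F]_n) m :
  (0 < m)%N -> (x ^+ m \in unitmx) -> x \in unitmx.
Proof. by case: m => // m _; rewrite exprS -mulmxE unitmx_mul => /andP[]. Qed.

Lemma le_log_bound_unitmx (C : numClosedFieldType) n k (e : 'I_k -> 'M[C]_n) :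
  (0 < n)%N -> anticommuting e ->
  (forall i, ~~ (0 < \rank (e i ^+ n) < n)%N) ->
  le_log_bound (\sum_(i < k) \rank (e i ^+ n)) n.
Proof.
move=> n0 ac rk0n; set S := [set i | \rank (e i ^+ n) == n].
have -> : (\sum_(i < k) \rank (e i ^+ n) = \sum_(i in S) n)%N.
  rewrite [RHS]big_mkcond; apply: eq_bigr => i _; rewrite inE.
  have := rk0n i; have := rank_leq_col (e i ^+ n).
  by case: eqP => [//|ne]; rewrite negb_and -!leqNgt; lia.
rewrite sum_nat_const mulnC; apply: (le_log_bound_mul n0).
apply: (@anticommuting_unitmx_bound _ #|S| _ (e \o enum_val)) => //.
  exact: anticommuting_comp enum_val_inj ac.
move=> j; apply: (unitmx_of_exp n0); rewrite -row_free_unit.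
by have := enum_valP j; rewrite inE.
Qed.

Theorem theorem3 (C : numClosedFieldType) (n k : nat) (e : 'I_k -> 'M[C]_n) :
  (1 <= n)%N -> anticommuting e ->
  le_log_bound (\sum_(i < k) \rank (e i ^+ n)%R)%N n.
Proof.
elim/ltn_ind: n k e => n IHn k e n0 ac.
have [i /andP[rk0 rkn] | none] := pickP (fun i => 0 < \rank (e i ^+ n) < n)%N;
  last by apply: le_log_bound_unitmx => // i; rewrite none.
set A := e i ^+ n.
have rkAA : \rank (A *m A) = \rank A.
  by rewrite mulmxE -exprD mxrank_expr_stable // leq_addr.
have sA j : stablemx A (e j) /\ stablemx (kermx A) (e j).
  have [c c0 ejA] := anticommuting_exp_semicomm i j n ac.
  by split; [apply: semicomm_mx_stable c0 ejA | apply: semicomm_mx_stable_ker ejA].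
have IHstable (V : 'M_n) : (0 < \rank V < n)%N -> (forall j, stablemx V (e j)) ->
    le_log_bound (\sum_(j < k) \rank (restrmx (row_base V) (e j) ^+ \rank V)) (\rank V).
  move=> /andP[V0 Vn] sV.
  apply: (IHn _ Vn _ _ V0 (anticommuting_restrmx (row_base_free V) _ ac)) => j.
  by rewrite stablemx_row_base.
rewrite (eq_bigr _ (fun j _ => mxrank_exp_fitting rkAA (sA j).1 (sA j).2)).
rewrite big_split /=; apply: (le_log_bound_add rk0 rkn).
  by apply: IHstable => [|j]; [rewrite rk0 | case: (sA j)].
rewrite -mxrank_ker; apply: IHstable => [|j]; last by case: (sA j).
by rewrite mxrank_ker subn_gt0 rkn ltn_subrL rk0.
Qed.
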